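(* Let $\alpha\in(\pi/8,3\pi/8)$ with $\alpha/\pi\notin\mathbb{Q}$, $\beta=\alpha-\pi/2$, $\rho=0.01$, $A_1=\rho R(\alpha)$, $A_2=\rho R(\beta)$ where $R(\theta)=\begin{bmatrix}\cos\theta&-\sin\theta\\ \sin\theta&\cos\theta\end{bmatrix}$, and $c(x)=x_1^2+2x_2^2$ on $\mathbb{R}^2$. Let $J^\star$ be the optimal value function of $\{A_1,A_2\}$ with cost $c$, $\tilde J^\star(\theta)=J^\star([\cos\theta,\sin\theta]^\top)$, $\Delta\tilde J^\star(\theta)=\tilde J^\star(\theta+\alpha)-\tilde J^\star(\theta+\beta)$, $\mu=\pi/4-\alpha$, $\delta=0.01$. Let $\nu\in(\mu-\delta,\mu+\delta)$ satisfy $\Delta\tilde J^\star(\nu)=0$. Then $\tilde J^\star$ is not differentiable at $\nu$.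
   Context: For the switched linear system $\xi(t+1)=A_{\sigma(t)}\xi(t)$ with switching signal $\sigma:\mathbb{N}\to\{1,2\}$, $\xi(t,x,\sigma)$ denotes the solution with $\xi(0)=x$, and $J^\star(x)=\inf_\sigma\sum_{t=0}^\infty c(\xi(t,x,\sigma))$. (Such a $\nu$ exists and is unique in $(\mu-\delta,\mu+\delta)$.) *)

From Stdlib Require Import Reals.
From Coquelicot Require Import Coquelicot.
Open Scope R_scope.

Definition vec2 := (R * R)%type.

(* The rotation matrix R(theta) = [[cos, -sin],[sin, cos]] scaled by rho,
   applied to a vector. *)
Definition rot_scaled (rho theta : R) (x : vec2) : vec2 :=
  (rho * (cos theta * fst x - sin theta * snd x),
   rho * (sin theta * fst x + cos theta * snd x)).

(* Switched linear system xi(t+1) = A_{sigma(t)} xi(t), sigma : nat -> {1,2};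
   mode 1 is encoded as [true], mode 2 as [false]. *)
Fixpoint xi (A1 A2 : vec2 -> vec2) (x : vec2) (sigma : nat -> bool) (t : nat) : vec2 :=
  match t with
  | O => x
  | S t' => (if sigma t' then A1 else A2) (xi A1 A2 x sigma t')
  end.

(* Optimal value J*(x) = inf_sigma sum_{t>=0} c(xi(t,x,sigma)),
   as an extended real (infimum over the values of the convergent cost series;
   for the system of the statement all these series converge). *)
Definition J_star (A1 A2 : vec2 -> vec2) (c : vec2 -> R) (x : vec2) : Rbar :=
  Glb_Rbar (fun v => exists sigma : nat -> bool,
                is_series (fun t => c (xi A1 A2 x sigma t)) v).

Definition cost (x : vec2) : R := fst x ^ 2 + 2 * snd x ^ 2.

Definition Jtilde (rho alpha beta : R) (theta : R) : R :=
  real (J_star (rot_scaled rho alpha) (rot_scaled rho beta) cost (cos theta, sin theta)).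

(** Along a switched trajectory from [(cos th, sin th)] the state is [r^t] times the unit vector
    at angle [th] plus the accumulated rotation, so the value function [J := Jtilde r a1 a2]
    satisfies the Bellman equation [J th = k th + r^2 min (J (th + a1)) (J (th + a2))] with
    [k x = 1 + sin x ^ 2], and [J] and [J - k] are Lipschitz with constants [L = 1/(1 - r^2)]
    and [r^2 L].  If mode [b] is optimal at [nu], then [J - k - r^2 k(. + a_b)] grows from [nu]
    at most like [r^4 L |h|]; so if [J] has derivative [d] at [nu], then [d] lies within [r^4 L]
    of [k'(nu) + r^2 k'(nu + a_b)].  When both modes are optimal this forces
    [r^2 |k'(nu + a1) - k'(nu + a2)| <= 2 r^4 L]; for [a2 = a1 - pi/2] the left-hand side is
    [2 r^2 sin (2 (nu + a1))], which is close to [2 r^2] because [nu + a1] is close to [pi/4]. *)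

From Stdlib Require Import Reals Lra.
From Coquelicot Require Import Coquelicot.
Open Scope R_scope.

Lemma is_series_le (a b : nat -> R) (la lb : R) :
  is_series a la -> is_series b lb -> (forall n, a n <= b n) -> la <= lb.
Proof.
  intros Ha Hb Hab.
  apply (is_lim_seq_le (sum_n a) (sum_n b) la lb); auto.
  intros n. apply sum_n_m_le, Hab.
Qed.

Lemma is_series_geom_sq (r : R) : 0 < r < 1 -> is_series (fun n => (r ^ 2) ^ n) (/ (1 - r ^ 2)).
Proof. intros Hr. apply is_series_geom. rewrite Rabs_right by nra. nra. Qed.

(* Take [h] with the sign of [e]: then [F (x + h) - F x] is close to [|e| |h|]. *)
Lemma is_derive_Rabs_le (F : R -> R) (x e C : R) :
  is_derive F x e -> (forall h, F (x + h) - F x <= C * Rabs h) -> Rabs e <= C.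
Proof.
  intros Hd Hb. apply is_derive_Reals in Hd.
  destruct (Rle_dec (Rabs e) C) as [ok | nok]; auto. exfalso.
  destruct (Hd (Rabs e - C)) as [[d d_pos] Hdel]; [lra |]. simpl in Hdel.
  set (h := if Rle_dec 0 e then d / 2 else - (d / 2)).
  assert (Hh : h <> 0 /\ Rabs h < d /\ h * e = Rabs h * Rabs e).
  { unfold h. destruct (Rle_dec 0 e).
    - rewrite (Rabs_right (d / 2)), (Rabs_right e) by lra. repeat split; lra.
    - rewrite Rabs_Ropp, (Rabs_right (d / 2)), (Rabs_left e) by lra. repeat split; lra. }
  destruct Hh as [h_neq [h_small h_sign]].
  specialize (Hdel h h_neq h_small). specialize (Hb h).
  set (q := (F (x + h) - F x) / h) in Hdel.
  assert (Hq : F (x + h) - F x = q * h) by (unfold q; field; exact h_neq).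
  assert (Hqe : Rabs (q * h - e * h) < (Rabs e - C) * Rabs h).
  { replace (q * h - e * h) with ((q - e) * h) by ring. rewrite Rabs_mult.
    apply Rmult_lt_compat_r; [apply Rabs_pos_lt |]; assumption. }
  apply Rabs_def2 in Hqe. nra.
Qed.

Definition mode_angle (a1 a2 : R) (b : bool) : R := if b then a1 else a2.

Fixpoint total_angle (a1 a2 : R) (s : nat -> bool) (t : nat) : R :=
  match t with
  | O => 0
  | S t' => total_angle a1 a2 s t' + mode_angle a1 a2 (s t')
  end.

Lemma total_angle_S (a1 a2 : R) (s : nat -> bool) (t : nat) :
  total_angle a1 a2 s (S t) = mode_angle a1 a2 (s 0%nat) + total_angle a1 a2 (fun n => s (S n)) t.
Proof.
  induction t as [| t IH]; simpl in *.
  - ring.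
  - rewrite IH. ring.
Qed.

Lemma xi_rot_scaled (r a1 a2 th : R) (s : nat -> bool) (t : nat) :
  xi (rot_scaled r a1) (rot_scaled r a2) (cos th, sin th) s t =
  (r ^ t * cos (th + total_angle a1 a2 s t), r ^ t * sin (th + total_angle a1 a2 s t)).
Proof.
  induction t as [| t IH]; simpl.
  - rewrite Rplus_0_r. f_equal; ring.
  - rewrite IH. unfold rot_scaled; simpl.
    replace (th + (total_angle a1 a2 s t + mode_angle a1 a2 (s t)))
      with (th + total_angle a1 a2 s t + mode_angle a1 a2 (s t)) by ring.
    set (phi := th + total_angle a1 a2 s t).
    rewrite (cos_plus phi), (sin_plus phi). destruct (s t); simpl; f_equal; ring.
Qed.

Definition circle_cost (x : R) : R := cos x ^ 2 + 2 * sin x ^ 2.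

Lemma circle_cost_bounds (x : R) : 0 <= circle_cost x <= 2.
Proof. unfold circle_cost. pose proof (sin2_cos2 x). unfold Rsqr in *. nra. Qed.

Lemma is_derive_circle_cost (x : R) : is_derive circle_cost x (sin (2 * x)).
Proof. unfold circle_cost. auto_derive; auto. rewrite sin_2a. ring. Qed.

Lemma circle_cost_lipschitz (x y : R) : Rabs (circle_cost y - circle_cost x) <= Rabs (y - x).
Proof.
  rewrite <- (Rmult_1_l (Rabs (y - x))).
  apply (bounded_variation circle_cost (fun t => sin (2 * t))).
  intros t _. split; [apply is_derive_circle_cost |].
  apply Rabs_le, SIN_bound.
Qed.

Section ValueFunction.

Variables (r a1 a2 : R).
Hypothesis r_bounds : 0 < r < 1.

Definition stage_cost (th : R) (s : nat -> bool) (t : nat) : R :=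
  cost (xi (rot_scaled r a1) (rot_scaled r a2) (cos th, sin th) s t).

Let J := Jtilde r a1 a2.
Let L := / (1 - r ^ 2).
Let k := circle_cost.

Lemma stage_cost_eq (th : R) (s : nat -> bool) (t : nat) :
  stage_cost th s t = (r ^ 2) ^ t * k (th + total_angle a1 a2 s t).
Proof.
  unfold stage_cost. rewrite xi_rot_scaled. unfold cost, k, circle_cost; simpl fst; simpl snd.
  rewrite <- pow_mult, Nat.mul_comm, pow_mult. ring.
Qed.

Lemma stage_cost_bounds (th : R) (s : nat -> bool) (t : nat) :
  0 <= stage_cost th s t <= 2 * (r ^ 2) ^ t.
Proof.
  rewrite stage_cost_eq. pose proof (circle_cost_bounds (th + total_angle a1 a2 s t)).
  assert (0 <= (r ^ 2) ^ t) by (apply pow_le; nra). unfold k. nra.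
Qed.

Lemma ex_series_stage_cost (th : R) (s : nat -> bool) : ex_series (stage_cost th s).
Proof.
  apply (@ex_series_le R_AbsRing R_CompleteNormedModule _ (fun n => (r ^ 2) ^ n * 2)).
  - intros n. change (norm ?x) with (Rabs x). pose proof (stage_cost_bounds th s n).
    rewrite Rabs_right; lra.
  - eexists. apply is_series_scal_r, is_series_geom_sq, r_bounds.
Qed.

Lemma is_series_stage_cost_ge0 (th : R) (s : nat -> bool) (v : R) :
  is_series (stage_cost th s) v -> 0 <= v.
Proof.
  intros Hs.
  pose proof (is_series_scal_r 0 _ _ (is_series_geom_sq r r_bounds)) as H0.
  rewrite Rmult_0_r in H0.
  apply (is_series_le _ _ 0 v H0 Hs).
  intros n. rewrite Rmult_0_r. apply stage_cost_bounds.
Qed.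

Lemma stage_cost_S (th : R) (s : nat -> bool) (t : nat) :
  stage_cost th s (S t) =
  r ^ 2 * stage_cost (th + mode_angle a1 a2 (s 0%nat)) (fun n => s (S n)) t.
Proof. rewrite !stage_cost_eq, total_angle_S, Rplus_assoc. simpl. ring. Qed.

Lemma is_series_stage_cost_shift (th : R) (s : nat -> bool) (v : R) :
  is_series (stage_cost (th + mode_angle a1 a2 (s 0%nat)) (fun n => s (S n))) v <->
  is_series (stage_cost th s) (k th + r ^ 2 * v).
Proof.
  assert (r2_neq : r ^ 2 <> 0) by (apply pow_nonzero; lra).
  assert (Hk0 : stage_cost th s 0%nat = k th).
  { rewrite stage_cost_eq. simpl. rewrite Rplus_0_r. ring. }
  split; intros H.
  - apply is_series_decr_1.
    match goal with |- is_series _ ?l => replace l with (v * r ^ 2) end.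
    + apply (is_series_ext (fun n => stage_cost (th + mode_angle a1 a2 (s 0%nat)) (fun n => s (S n)) n * r ^ 2)).
      * intros n. rewrite stage_cost_S. apply Rmult_comm.
      * apply is_series_scal_r, H.
    + rewrite Hk0. change (v * r ^ 2 = k th + r ^ 2 * v - k th). ring.
  - apply (is_series_ext (fun n => stage_cost th s (S n) * / r ^ 2)).
    + intros n. rewrite stage_cost_S. exact (Rinv_r_simpl_m (r ^ 2) _ r2_neq).
    + replace v with ((r ^ 2 * v) * / r ^ 2) by (field; lra).
      apply is_series_scal_r, is_series_incr_1.
      match goal with |- is_series _ ?l => replace l with (k th + r ^ 2 * v) end; [exact H |].
      rewrite Hk0. change (k th + r ^ 2 * v = r ^ 2 * v + k th). ring.
Qed.

Lemma Jtilde_glb (th : R) :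
  is_glb_Rbar (fun v : R => exists s, is_series (stage_cost th s) v) (J th).
Proof.
  set (E := fun v : R => exists s, is_series (stage_cost th s) v).
  change (is_glb_Rbar E (real (Glb_Rbar E))).
  destruct (Glb_Rbar_correct E) as [lb glb].
  destruct (ex_series_stage_cost th (fun _ => true)) as [v0 Hv0].
  assert (lb0 : Rbar_le 0 (Glb_Rbar E)).
  { apply glb. intros v [s Hs]. exact (is_series_stage_cost_ge0 th s v Hs). }
  pose proof (lb v0 (ex_intro _ (fun _ : nat => true) Hv0)) as le_v0.
  destruct (Glb_Rbar E); simpl in *; try contradiction.
  split; assumption.
Qed.

Lemma Jtilde_le_series (th : R) (s : nat -> bool) (v : R) :
  is_series (stage_cost th s) v -> J th <= v.
Proof. intros Hs. exact (proj1 (Jtilde_glb th) v (ex_intro _ s Hs)). Qed.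

Lemma Jtilde_ge_lb (th m : R) :
  (forall s (v : R), is_series (stage_cost th s) v -> m <= v) -> m <= J th.
Proof.
  intros Hm. apply (proj2 (Jtilde_glb th) m). intros v [s Hs]. exact (Hm s v Hs).
Qed.

Lemma Jtilde_lipschitz (x y : R) : J y <= J x + L * Rabs (y - x).
Proof.
  cut (J y - L * Rabs (y - x) <= J x); [lra |].
  apply Jtilde_ge_lb. intros s v Hs.
  destruct (ex_series_stage_cost y s) as [v' Hv'].
  cut (v' <= v + L * Rabs (y - x)); [pose proof (Jtilde_le_series y s v' Hv'); lra |].
  assert (Hmaj : is_series (fun n => stage_cost x s n + (r ^ 2) ^ n * Rabs (y - x))
                  (v + L * Rabs (y - x))).
  { apply (is_series_plus _ _ v (L * Rabs (y - x)) Hs).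
    apply is_series_scal_r, is_series_geom_sq, r_bounds. }
  apply (is_series_le _ _ _ _ Hv' Hmaj).
  intros n. rewrite !stage_cost_eq.
  pose proof (circle_cost_lipschitz (x + total_angle a1 a2 s n) (y + total_angle a1 a2 s n)) as Hk.
  replace (y + total_angle a1 a2 s n - (x + total_angle a1 a2 s n)) with (y - x) in Hk by ring.
  apply Rabs_le_between in Hk.
  assert (0 <= (r ^ 2) ^ n) by (apply pow_le; nra). unfold k. nra.
Qed.

Lemma Jtilde_bellman_le (th : R) (b : bool) : J th <= k th + r ^ 2 * J (th + mode_angle a1 a2 b).
Proof.
  assert (r2_pos : 0 < r ^ 2) by (apply pow_lt; lra).
  cut ((J th - k th) / r ^ 2 <= J (th + mode_angle a1 a2 b)).
  { intros Hle. apply (Rmult_le_compat_l (r ^ 2)) in Hle; [| lra].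
    unfold Rdiv in Hle. field_simplify in Hle; lra. }
  apply Jtilde_ge_lb. intros s v Hs.
  set (bs := fun n : nat => match n with O => b | S m => s m end).
  pose proof (Jtilde_le_series th bs _ (proj1 (is_series_stage_cost_shift th bs v) Hs)).
  apply (Rmult_le_reg_l (r ^ 2)); [lra |]. unfold Rdiv. field_simplify; lra.
Qed.

Lemma Jtilde_bellman_ge (th : R) :
  k th + r ^ 2 * Rmin (J (th + a1)) (J (th + a2)) <= J th.
Proof.
  assert (r2_pos : 0 < r ^ 2) by (apply pow_lt; lra).
  apply Jtilde_ge_lb. intros s v Hs.
  replace v with (k th + r ^ 2 * ((v - k th) / r ^ 2)) in Hs by (field; lra).
  apply is_series_stage_cost_shift, Jtilde_le_series in Hs.
  assert (Hmin : Rmin (J (th + a1)) (J (th + a2)) <= (v - k th) / r ^ 2).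
  { destruct (s 0%nat); cbn [mode_angle] in Hs;
      [pose proof (Rmin_l (J (th + a1)) (J (th + a2)))
      | pose proof (Rmin_r (J (th + a1)) (J (th + a2)))]; lra. }
  apply (Rmult_le_compat_l (r ^ 2)) in Hmin; [| lra].
  unfold Rdiv in Hmin. field_simplify in Hmin; lra.
Qed.

Lemma Jtilde_bellman (th : R) :
  exists b, J th = k th + r ^ 2 * J (th + mode_angle a1 a2 b).
Proof.
  pose proof (Jtilde_bellman_ge th) as Hge.
  destruct (Rle_dec (J (th + a1)) (J (th + a2))).
  - exists true. rewrite Rmin_left in Hge by lra.
    pose proof (Jtilde_bellman_le th true). simpl in *. lra.
  - exists false. rewrite Rmin_right in Hge by lra.
    pose proof (Jtilde_bellman_le th false). simpl in *. lra.
Qed.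

Lemma Jtilde_sub_cost_lipschitz (x y : R) :
  (J y - k y) - (J x - k x) <= r ^ 2 * (L * Rabs (y - x)).
Proof.
  destruct (Jtilde_bellman x) as [b Hx]. set (a := mode_angle a1 a2 b) in *.
  pose proof (Jtilde_bellman_le y b) as Hy. fold a in Hy.
  pose proof (Jtilde_lipschitz (x + a) (y + a)) as HL.
  replace (y + a - (x + a)) with (y - x) in HL by ring.
  apply (Rmult_le_compat_l (r ^ 2)) in HL; [| apply pow_le; lra].
  lra.
Qed.

Lemma optimal_mode_upper_bound (nu : R) (b : bool) :
  J nu = k nu + r ^ 2 * J (nu + mode_angle a1 a2 b) ->
  forall h, let F x := J x - (k x + r ^ 2 * k (x + mode_angle a1 a2 b)) in
  F (nu + h) - F nu <= r ^ 2 * (r ^ 2 * L) * Rabs h.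
Proof.
  intros Hopt h F. unfold F. set (a := mode_angle a1 a2 b) in *.
  pose proof (Jtilde_bellman_le (nu + h) b) as Hle. fold a in Hle.
  pose proof (Jtilde_sub_cost_lipschitz (nu + a) (nu + h + a)) as HG.
  replace (nu + h + a - (nu + a)) with h in HG by ring.
  apply (Rmult_le_compat_l (r ^ 2)) in HG; [| apply pow_le; lra].
  lra.
Qed.

Lemma optimal_mode_derive_bound (nu d : R) (b : bool) :
  J nu = k nu + r ^ 2 * J (nu + mode_angle a1 a2 b) -> is_derive J nu d ->
  Rabs (d - (sin (2 * nu) + r ^ 2 * sin (2 * (nu + mode_angle a1 a2 b)))) <= r ^ 2 * (r ^ 2 * L).
Proof.
  intros Hopt Hd. set (a := mode_angle a1 a2 b) in *.
  assert (Hk : is_derive (fun x => k x + r ^ 2 * k (x + a)) nu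
                 (sin (2 * nu) + r ^ 2 * sin (2 * (nu + a)))).
  { unfold k, circle_cost. auto_derive; auto. rewrite !sin_2a. ring. }
  apply (is_derive_Rabs_le (fun x => J x - (k x + r ^ 2 * k (x + a))) nu).
  - exact (is_derive_minus _ _ _ _ _ Hd Hk).
  - exact (optimal_mode_upper_bound nu b Hopt).
Qed.

End ValueFunction.

Lemma cos_ge_1_minus_sq (w : R) : Rabs w <= PI / 2 -> 1 - w ^ 2 / 2 <= cos w.
Proof.
  intros Hw. apply Rabs_le_between in Hw.
  destruct (cos_bound w 0) as [H _]; [lra | lra |].
  unfold cos_approx, cos_term in H. simpl in H. lra.
Qed.

Theorem lemma8 (alpha : R) :
  PI / 8 < alpha < 3 * PI / 8 ->
  (forall p q : Z, q <> 0%Z -> alpha / PI <> IZR p / IZR q) ->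
  forall nu : R,
    (PI / 4 - alpha) - (1/100) < nu < (PI / 4 - alpha) + (1/100) ->
    Jtilde (1/100) alpha (alpha - PI / 2) (nu + alpha)
      - Jtilde (1/100) alpha (alpha - PI / 2) (nu + (alpha - PI / 2)) = 0 ->
    ~ ex_derive (Jtilde (1/100) alpha (alpha - PI / 2)) nu.
Proof.
  intros _ _ nu Hnu Hbal [d Hd].
  set (r := 1/100) in *. set (beta := alpha - PI / 2) in *.
  assert (Hr : 0 < r < 1) by (unfold r; lra).
  assert (Hopt : forall b, Jtilde r alpha beta nu =
            circle_cost nu + r ^ 2 * Jtilde r alpha beta (nu + mode_angle alpha beta b)).
  { assert (Heq : Jtilde r alpha beta (nu + beta) = Jtilde r alpha beta (nu + alpha)) by lra.
    destruct (Jtilde_bellman r alpha beta Hr nu) as [b0 Hb0].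
    intros b. destruct b, b0; cbn [mode_angle] in *; try rewrite Heq in Hb0; try rewrite Heq; exact Hb0. }
  pose proof (optimal_mode_derive_bound r alpha beta Hr nu d true (Hopt true) Hd) as B1.
  pose proof (optimal_mode_derive_bound r alpha beta Hr nu d false (Hopt false) Hd) as B2.
  cbn [mode_angle] in B1, B2.
  set (u := nu + alpha) in B1.
  replace (2 * (nu + beta)) with (2 * u - PI) in B2 by (unfold u, beta; field).
  rewrite sin_minus, sin_PI, cos_PI in B2.
  assert (Hsin : 1 - (1 / 50) ^ 2 / 2 <= sin (2 * u)).
  { rewrite <- cos_shift.
    assert (Hw : Rabs (PI / 2 - 2 * u) <= 1 / 50).
    { apply Rabs_le. unfold u. unfold r in Hnu. lra. }
    pose proof (cos_ge_1_minus_sq (PI / 2 - 2 * u) ltac:(pose proof PI2_1; lra)).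
    pose proof (pow_maj_Rabs (1 / 50) (PI / 2 - 2 * u) 2 Hw). lra. }
  apply Rabs_le_between in B1. apply Rabs_le_between in B2.
  unfold r in B1, B2. lra.
Qed.
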